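(* Let $\mathcal{A}\in\mathbb{R}^{n\times n\times n}$ and $\mathcal{E}\in\mathbb{R}^{n\times n\times n}$ be such that $\mathcal{A}$ and $\tilde{\mathcal{A}}=\mathcal{A}+\mathcal{E}$ are piezoelectric-type tensors. Then $$\lambda_{C\max}(\mathcal{A})-\lambda_{C\max}(\mathcal{E})\le \lambda_{C\max}(\tilde{\mathcal{A}})\le \lambda_{C\max}(\mathcal{A})+\lambda_{C\max}(\mathcal{E}).$$
   Context: A tensor $\mathcal{A}=(a_{ijk})\in\mathbb{R}^{n\times n\times n}$ is piezoelectric-type if $a_{ijk}=a_{ikj}$ for all $i,j,k$ (so $\mathcal{E}=\tilde{\mathcal{A}}-\mathcal{A}$ is piezoelectric-type as well). For such $\mathcal{A}$ and $\mathbf{x},\mathbf{y}\in\mathbb{R}^n$, define $(\mathcal{A}\mathbf{y}\mathbf{y})_i=\sum_{j,k}a_{ijk}y_jy_k$, $(\mathbf{x}\mathcal{A}\mathbf{y})_i=\sum_{j,k}a_{jki}x_jy_k$, and $\mathbf{x}\mathcal{A}\mathbf{y}\mathbf{y}=\sum_{i,j,k}a_{ijk}x_iy_jy_k$. A $C$-eigenvalue of $\mathcal{A}$ is a real $\lambda$ for which there exist $\mathbf{x},\mathbf{y}\in\mathbb{R}^n$ with $\mathcal{A}\mathbf{y}\mathbf{y}=\lambda\mathbf{x}$, $\mathbf{x}\mathcal{A}\mathbf{y}=\lambda\mathbf{y}$, $\mathbf{x}^T\mathbf{x}=\mathbf{y}^T\mathbf{y}=1$. The largest $C$-eigenvalue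 is $\lambda_{C\max}(\mathcal{A})=\max\{\mathbf{x}\mathcal{A}\mathbf{y}\mathbf{y}:\mathbf{x}^T\mathbf{x}=1,\ \mathbf{y}^T\mathbf{y}=1\}$. *)

From mathcomp Require Import all_boot all_order all_algebra.
From mathcomp Require Import all_classical all_reals.
Set Implicit Arguments. Unset Strict Implicit. Unset Printing Implicit Defensive.
Import Order.TTheory GRing.Theory Num.Theory.
Local Open Scope ring_scope.
Local Open Scope classical_set_scope.

Definition tensor3 (R : realType) (n : nat) := 'I_n -> 'I_n -> 'I_n -> R.

Definition piezo_type (R : realType) (n : nat) (A : tensor3 R n) : Prop :=
  forall i j k, A i j k = A i k j.

Definition tadd (R : realType) (n : nat) (A E : tensor3 R n) : tensor3 R n :=
  fun i j k => A i j k + E i j k.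

Definition xAyy (R : realType) (n : nat) (A : tensor3 R n) (x y : 'I_n -> R) : R :=
  \sum_(i < n) \sum_(j < n) \sum_(k < n) A i j k * x i * y j * y k.

Definition unit_vec (R : realType) (n : nat) (x : 'I_n -> R) : Prop :=
  \sum_(i < n) x i ^+ 2 = 1.

(* lambda_Cmax(A) = max { x A y y : x^T x = 1, y^T y = 1 } (the max exists by
   compactness; we take the supremum of the value set). *)
Definition lambdaCmax (R : realType) (n : nat) (A : tensor3 R n) : R :=
  sup [set v | exists x y : 'I_n -> R,
          [/\ unit_vec x, unit_vec y & v = xAyy A x y]].

From mathcomp Require Import all_boot all_order all_algebra.
From mathcomp Require Import all_classical all_reals.
Import Order.TTheory GRing.Theory Num.Theory.
Local Open Scope ring_scope.
Local Open Scope classical_set_scope.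

(* [x A y y] is linear in the tensor, so its supremum over pairs of unit
   vectors is subadditive in the tensor.  For the lower bound write
   [x A y y = x (A + E) y y + (-x) E y y] and note that [-x] is again a unit
   vector. *)

Section LambdaCmax.
Variables (R : realType) (n : nat).
Implicit Types (A E : tensor3 R n) (x y : 'I_n -> R).

Definition xAyy_range A : set R := [set v | exists x y : 'I_n -> R,
  [/\ unit_vec x, unit_vec y & v = xAyy A x y]].

Lemma xAyy_tadd A E x y : xAyy (tadd A E) x y = xAyy A x y + xAyy E x y.
Proof.
rewrite /xAyy -big_split; apply: eq_bigr => i _.
rewrite -big_split; apply: eq_bigr => j _.
rewrite -big_split; apply: eq_bigr => k _.
by rewrite /tadd !mulrDl.
Qed.

Lemma xAyy_oppl A x y : xAyy A (fun i => - x i) y = - xAyy A x y.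
Proof.
rewrite /xAyy -sumrN; apply: eq_bigr => i _.
rewrite -sumrN; apply: eq_bigr => j _.
rewrite -sumrN; apply: eq_bigr => k _.
by rewrite mulrN !mulNr.
Qed.

Lemma unit_vec_opp x : unit_vec x -> unit_vec (fun i => - x i).
Proof. by rewrite /unit_vec => <-; apply: eq_bigr => i _; rewrite sqrrN. Qed.

Lemma unit_vec_dim_gt0 {x} : unit_vec x -> (0 < n)%N.
Proof.
move: x; case: n => [|//] x.
by rewrite /unit_vec big_ord0 => /esym/eqP; rewrite oner_eq0.
Qed.

Lemma unit_vec_norm_le1 {x} i : unit_vec x -> `|x i| <= 1.
Proof.
move=> ux; have xi2_le1 : x i ^+ 2 <= 1.
  rewrite -ux (bigD1 i) //= lerDl sumr_ge0 // => j _.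
  exact: sqr_ge0.
by rewrite -(expr_le1 (n:=2)) // real_normK ?num_real.
Qed.

Lemma xAyy_le_sum_norm A x y : unit_vec x -> unit_vec y ->
  xAyy A x y <= \sum_(i < n) \sum_(j < n) \sum_(k < n) `|A i j k|.
Proof.
move=> ux uy; rewrite /xAyy.
apply: ler_sum => i _; apply: ler_sum => j _; apply: ler_sum => k _.
apply: le_trans (ler_norm _) _; rewrite !normrM.
have xi_le1 := unit_vec_norm_le1 i ux.
have yj_le1 := unit_vec_norm_le1 j uy.
have yk_le1 := unit_vec_norm_le1 k uy.
rewrite -[leRHS]mulr1 -!mulrA ler_wpM2l // -[1]mulr1.
by rewrite ler_pM ?mulr_ge0 // -[1]mulr1 ler_pM.
Qed.

Lemma has_ubound_xAyy_range A : has_ubound (xAyy_range A).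
Proof.
exists (\sum_(i < n) \sum_(j < n) \sum_(k < n) `|A i j k|).
by move=> _ [x [y [ux uy ->]]]; apply: xAyy_le_sum_norm.
Qed.

Lemma xAyy_le_lambdaCmax A x y : unit_vec x -> unit_vec y ->
  xAyy A x y <= lambdaCmax A.
Proof.
by move=> ux uy; apply: (ub_le_sup (has_ubound_xAyy_range A)); exists x, y.
Qed.

Lemma lambdaCmax_le A c : (0 < n)%N ->
  (forall x y, unit_vec x -> unit_vec y -> xAyy A x y <= c) ->
  lambdaCmax A <= c.
Proof.
case: n => [//|m] in A * => _ A_le_c.
pose e0 : 'I_m.+1 -> R := fun i => (i == ord0)%:R.
have ue0 : unit_vec e0.
  rewrite /unit_vec /e0 (bigD1 ord0) //= big1 ?addr0 ?eqxx ?expr1n //.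
  by move=> i /negbTE ->; rewrite expr0n.
apply: ge_sup; first by exists (xAyy A e0 e0), e0, e0.
by move=> _ [x [y [ux uy ->]]]; apply: A_le_c.
Qed.

Lemma lambdaCmax_dim0 A : n = 0%N -> lambdaCmax A = 0.
Proof.
move=> n0; change (sup (xAyy_range A) = 0).
suff -> : xAyy_range A = set0 by exact: sup0.
apply/seteqP; split=> // v [x [y [ux _ _]]].
by move: (unit_vec_dim_gt0 ux); rewrite n0.
Qed.

Lemma lambdaCmax_tadd_le A E : lambdaCmax (tadd A E) <= lambdaCmax A + lambdaCmax E.
Proof.
have [n0|n_gt0] := posnP n; first by rewrite !lambdaCmax_dim0 ?addr0.
apply: lambdaCmax_le => // x y ux uy.
by rewrite xAyy_tadd; apply: lerD; apply: xAyy_le_lambdaCmax.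
Qed.

Lemma lambdaCmax_sub_le A E : lambdaCmax A - lambdaCmax E <= lambdaCmax (tadd A E).
Proof.
have [n0|n_gt0] := posnP n; first by rewrite !lambdaCmax_dim0 ?subr0.
rewrite lerBlDr; apply: lambdaCmax_le => // x y ux uy.
have -> : xAyy A x y = xAyy (tadd A E) x y + xAyy E (fun i => - x i) y.
  by rewrite xAyy_tadd xAyy_oppl addrK.
apply: lerD; apply: xAyy_le_lambdaCmax => //; exact: unit_vec_opp.
Qed.

End LambdaCmax.

Theorem theorem2p1 (R : realType) (n : nat) (A E : tensor3 R n) :
  piezo_type A -> piezo_type (tadd A E) ->
  lambdaCmax A - lambdaCmax E <= lambdaCmax (tadd A E) /\
  lambdaCmax (tadd A E) <= lambdaCmax A + lambdaCmax E.
Proof.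
by move=> _ _; split; [exact: lambdaCmax_sub_le | exact: lambdaCmax_tadd_le].
Qed.
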